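(* Let $n$ be a positive integer, let $p\ge q$ be positive integers, and let $B$ be a $p\times q$ matrix. For each positive divisor $k$ of $n$, let $F_k$ be the symmetric block matrix of size $kq+\frac{n}{k}p$ whose block rows and columns have sizes, in order, $p$, then $q$ repeated $k$ times, then $p$ repeated $\frac{n}{k}-1$ times; the block in a size-$p$ block row and a size-$q$ block column is $B$, the block in a size-$q$ block row and a size-$p$ block column is $B^T$, and all other blocks are zero. That is, $$F_k=\begin{bmatrix} 0 & B & \cdots & B & 0 & \cdots & 0\\ B^T & 0 & \cdots & 0 & B^T & \cdots & B^T\\ \vdots & \vdots & \ddots & \vdots & \vdots & \ddots & \vdots\\ B^T & 0 & \cdots & 0 & B^T & \cdots & B^T\\ 0 & B & \cdots & B & 0 & \cdots & 0\\ \vdots & \vdots & \ddots & \vdots & \vdots & \ddots & \vdots\\ 0 & B & \cdots & B & 0 & \cdots & 0\end{bmatrix}.$$ Then the matrices $F_k\oplus 0_{(n-\frac{n}{k})p+(1-k)q}$, as $k$ ranges over all positive divisors of $n$, are pairwise cospectral.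
   Context: For matrices $X,Y$, $X\oplus Y=\begin{bmatrix} X&0\\0&Y\end{bmatrix}$; $0_m$ is the $m\times m$ zero matrix. Two square matrices are cospectral if they have the same eigenvalues with the same multiplicities. *)

From HB Require Import structures.
From mathcomp Require Import all_boot all_order all_algebra.
Set Implicit Arguments. Unset Strict Implicit. Unset Printing Implicit Defensive.
Import Order.TTheory GRing.Theory Num.Theory.
Local Open Scope ring_scope.

Definition Bnat (R : rcfType) (p q : nat) (B : 'M[R]_(p, q)) (a b : nat) : R :=
  match (insub a : option 'I_p), (insub b : option 'I_q) with
  | Some i, Some j => B i j
  | _, _ => 0
  end.

(* Block structure of F_k (0-based scalar indices r):
   block 0 : rows [0, p)                     -- a "p-block"
   blocks 1..k : rows [p, p + k q), size q  -- "q-blocks"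
   remaining : rows [p + k q, ...), size p  -- "p-blocks" *)
Definition is_pblock (p q k r : nat) : bool := (r < p)%N || (p + k * q <= r)%N.

Definition blk_off (p q k r : nat) : nat :=
  if (r < p)%N then r
  else if (r < p + k * q)%N then ((r - p) %% q)%N
  else ((r - p - k * q) %% p)%N.

Definition Fentry (R : rcfType) (p q k : nat) (B : 'M[R]_(p, q)) (r c : nat) : R :=
  if is_pblock p q k r && ~~ is_pblock p q k c then
    Bnat B (blk_off p q k r) (blk_off p q k c)
  else if ~~ is_pblock p q k r && is_pblock p q k c then
    Bnat B (blk_off p q k c) (blk_off p q k r)
  else 0.

Definition Fmat (R : rcfType) (n p q k : nat) (B : 'M[R]_(p, q))
  : 'M[R]_(k * q + n %/ k * p) :=
  \matrix_(i, j) @Fentry R p q k B i j.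

(* F_k (+) 0_{(n - n/k) p + (1 - k) q}; the padding size is written in nat,
   (n - n/k) p + q - k q, which is the true value under the hypotheses. *)
Definition Fpad (R : rcfType) (n p q k : nat) (B : 'M[R]_(p, q))
  : 'M[R]_(k * q + n %/ k * p + ((n - n %/ k) * p + q - k * q)) :=
  block_mx (@Fmat R n p q k B) 0 0 0.

Definition cospectral (R : rcfType) (m m' : nat) (A : 'M[R]_m) (A' : 'M[R]_m') : Prop :=
  m = m' /\ forall x : R, mup x (char_poly A) = mup x (char_poly A').

From HB Require Import structures.
From mathcomp Require Import all_boot all_order all_algebra.
From mathcomp Require Import zify.
Import Order.TTheory GRing.Theory Num.Theory.

(* Let C = [[0, B], [B^T, 0]], of size p + q.  Every index of F_k copies a row
   of C: an index in a p-block copies row "offset", an index in a q-block copies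
   row "p + offset".  Hence F_k = D C D^T for the 0/1 matrix D of this folding
   map, and F_k (+) 0 = D' C D'^T with D' = [D; 0] of height n p + q.  Then
   X^(p+q) chi(D' C D'^T) = X^(np+q) chi(C D^T D), where
   D^T D = diag((n/k) I_p, k I_q) counts how often each row of C is copied, and
   C D^T D = [[0, k B], [(n/k) B^T, 0]] is similar, via diag(k I_p, I_q), to
   [[0, B], [n B^T, 0]], which no longer depends on k. *)

Lemma sum_nat_eq_lt (c d : nat) : \sum_(0 <= i < d) (c == i) = (c < d).
Proof.
elim: d => [|d IHd]; first by rewrite big_nil.
by rewrite big_nat_recr //= IHd ltnS [in RHS]leq_eqVlt; case: ltngtP.
Qed.

Lemma sum_nat_eq_modn (c d j : nat) :
  \sum_(0 <= i < j * d) (c == i %% d) = j * (c < d).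
Proof.
elim: j => [|j IHj]; first by rewrite mul0n big_nil.
rewrite !mulSnr (big_cat_nat (n := j * d)) ?leq_addr //= IHj; congr (_ + _).
rewrite (big_addn 0 (j * d + d) (j * d)) addKn -sum_nat_eq_lt.
by apply: eq_big_nat => i /andP[_ ltid]; rewrite addnC modnMDl modn_small.
Qed.

Section FoldIndex.

Variables p q k : nat.

(* The row of [[0, B], [B^T, 0]] copied by index r of F_k. *)
Definition fold_index (r : nat) : nat :=
  if is_pblock p q k r then blk_off p q k r else p + blk_off p q k r.

Lemma fold_index_head r : r < p -> fold_index r = r.
Proof. by move=> ltrp; rewrite /fold_index /is_pblock /blk_off ltrp. Qed.

Lemma fold_index_qblock i : i < k * q -> fold_index (p + i) = p + i %% q.
Proof.
move=> ltikq; have ltpi : p + i < p + k * q by rewrite ltn_add2l.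
rewrite /fold_index /is_pblock /blk_off ltnNge leq_addr /= leqNgt ltpi /=.
by rewrite addKn.
Qed.

Lemma fold_index_tail i : fold_index (p + k * q + i) = i %% p.
Proof.
rewrite /fold_index /is_pblock /blk_off leq_addr orbT.
rewrite ifF; last by apply/negbTE; rewrite -leqNgt -addnA leq_addr.
rewrite ifF; last by apply/negbTE; rewrite -leqNgt leq_addr.
by rewrite -subnDA addKn.
Qed.

Lemma fold_index_lt (m r : nat) : r < k * q + m * p -> fold_index r < p + q.
Proof.
move=> ltrN; rewrite /fold_index /is_pblock /blk_off.
case: (ltnP r p) => [ltrp|lepr] /=; first exact: ltn_addr.
case: (ltnP r (p + k * q)) => [ltrpq|lepqr] /=.
  have q0 : 0 < q.
    by rewrite lt0n; apply: contraTneq ltrpq => ->; rewrite muln0 addn0 -leqNgt.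
  by rewrite ltn_add2l ltn_pmod.
rewrite ltn_addr // ltn_pmod // lt0n; apply/eqP => p0.
by move: ltrN; rewrite p0 muln0 addn0 ltnNge (leq_trans (leq_addl _ _) lepqr).
Qed.

Lemma fold_index_ltp r : 0 < p -> (fold_index r < p) = is_pblock p q k r.
Proof.
move=> p0; rewrite /fold_index.
case: ifP => pblock; last by rewrite ltnNge leq_addr.
move: pblock; rewrite /is_pblock /blk_off; case: (ltnP r p) => //= lepr lepqr.
by rewrite ifF ?ltn_pmod // ltnNge lepqr.
Qed.

Lemma sum_fold_index_eq m a : 0 < m -> a < p + q ->
  \sum_(0 <= r < k * q + m * p) (a == fold_index r) = if a < p then m else k.
Proof.
case: m => // m _ ltapq; rewrite mulSn addnCA addnA.
rewrite (big_cat_nat (n := p + k * q)) ?leq_addr //=.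
rewrite (big_cat_nat (n := p)) ?leq_addr //= (big_addn 0 (p + k * q) p).
rewrite (big_addn 0 (p + k * q + m * p) (p + k * q)) !addKn.
under eq_big_nat => r /andP[_ ltrp] do rewrite fold_index_head //.
under [X in _ + X + _]eq_big_nat => i /andP[_ ltikq]
  do rewrite addnC fold_index_qblock //.
under [X in _ + X]eq_big_nat => i _ do rewrite addnC fold_index_tail.
rewrite sum_nat_eq_lt sum_nat_eq_modn.
case: (ltnP a p) => [ltap|leap].
  rewrite big1_seq ?addn0 ?muln1 // => i _.
  by rewrite ltn_eqF // ltn_addr.
rewrite -(subnKC leap) ltn_add2l in ltapq *.
under eq_big_nat => i _ do rewrite eqn_add2l.
by rewrite sum_nat_eq_modn ltapq muln1 muln0 addn0.
Qed.

End FoldIndex.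

Lemma Fpad_size n p q k : 0 < n -> q <= p -> k %| n ->
  k * q + n %/ k * p + ((n - n %/ k) * p + q - k * q) = n * p + q.
Proof.
move=> n0 leqp /divnK def_n; move: (n %/ k) def_n => m def_n; subst n.
have /andP[m0 k0] : (0 < m) && (0 < k) by rewrite -muln_gt0.
have le_qp : k.-1 * q <= m * k * p - m * p.
  by rewrite -mulnBl leq_mul // -[X in _ - X]muln1 -mulnBr subn1 leq_pmull.
have le_mp : m * p <= m * k * p by rewrite mulnAC leq_pmulr.
have def_kq : k * q = q + k.-1 * q by rewrite -mulSn prednK.
rewrite mulnBl; lia.
Qed.

Local Open Scope ring_scope.

Lemma det_sub_mulmxC (R : comNzRingType) m n
    (A : 'M[R]_(m, n)) (B : 'M[R]_(n, m)) (x : R) :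
  x ^+ n * \det (x%:M - A *m B) = x ^+ m * \det (x%:M - B *m A).
Proof.
pose P := block_mx (x%:M : 'M_m) A B (1%:M : 'M_n).
pose L := block_mx (1%:M : 'M_m) 0 (- B) (x%:M : 'M_n).
have LP : L *m P = block_mx x%:M A 0 (x%:M - B *m A).
  rewrite /L /P mulmx_block !mul1mx !mul0mx !addr0 mulmx1.
  by rewrite !mulNmx mul_mx_scalar mul_scalar_mx addNr addrC.
have P_factor : P = block_mx 1%:M A 0 1%:M *m block_mx (x%:M - A *m B) 0 B 1%:M.
  by rewrite mulmx_block !mul1mx !mul0mx !mulmx1 !add0r ?addr0 subrK.
have := congr1 determinant LP; rewrite det_mulmx det_ublock det_scalar.
rewrite /L det_lblock det1 det_scalar mul1r => <-; congr (_ * _).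
by rewrite P_factor det_mulmx det_ublock det_lblock !det1 !mul1r !mulr1.
Qed.

Lemma char_poly_mulmxC (R : comNzRingType) m n
    (A : 'M[R]_(m, n)) (B : 'M[R]_(n, m)) :
  'X^n * char_poly (A *m B) = 'X^m * char_poly (B *m A).
Proof. by rewrite /char_poly /char_poly_mx !map_mxM det_sub_mulmxC. Qed.

Lemma char_poly_intertwine (R : idomainType) n (A A' T : 'M[R]_n) :
  A *m T = T *m A' -> \det T != 0 -> char_poly A = char_poly A'.
Proof.
move=> AT_TA' detT_neq0.
have : char_poly_mx A *m map_mx polyC T = map_mx polyC T *m char_poly_mx A'.
  rewrite /char_poly_mx mulmxBl mulmxBr mul_scalar_mx mul_mx_scalar.
  by rewrite -!map_mxM AT_TA'.
move/(congr1 determinant); rewrite !det_mulmx det_map_mx mulrC.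
by apply: mulfI; rewrite polyC_eq0.
Qed.

Lemma char_poly_antidiag_scale (R : idomainType) p q
    (A : 'M[R]_(p, q)) (A' : 'M[R]_(q, p)) (b : R) :
  b != 0 ->
  char_poly (block_mx 0 (b *: A) A' 0) = char_poly (block_mx 0 A (b *: A') 0).
Proof.
move=> b_neq0; apply: (@char_poly_intertwine _ _ _ _ (block_mx b%:M 0 0 1%:M)).
  rewrite !mulmx_block !mulmx0 !mul0mx !mulmx1 !mul1mx !addr0 !add0r.
  by rewrite mul_mx_scalar mul_scalar_mx.
by rewrite det_ublock det_scalar det1 mulr1 expf_neq0.
Qed.

Lemma mxsubE_mul (R : pzSemiRingType) m n m' n'
    (f : 'I_m' -> 'I_m) (g : 'I_n' -> 'I_n) (A : 'M[R]_(m, n)) :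
  mxsub f g A = rowsub f 1%:M *m A *m (rowsub g 1%:M)^T.
Proof.
by rewrite trmx_mxsub trmx1 mulmx_colsub mulmx1 mul_rowsub_mx mul1mx mxsubcr.
Qed.

Lemma tr_rowsub1_mulmx (R : pzSemiRingType) m n (f : 'I_m -> 'I_n) :
  (rowsub f 1%:M)^T *m rowsub f 1%:M
    = diag_mx (\row_j #|[pred i | f i == j]|%:R) :> 'M[R]_n.
Proof.
apply/matrixP => a b; rewrite !mxE.
under eq_bigr => i _ do rewrite !mxE -natrM mulnb.
case: eqVneq => [<-|neq_ab]; last first.
  by rewrite big1 // => i _; case: eqP => // ->; rewrite (negPf neq_ab).
rewrite /= mulr1n -natr_sum -sum1_card; congr _%:R.
rewrite [RHS]big_mkcond; apply: eq_bigr => i _; rewrite andbb inE; by case: eqP.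
Qed.

Lemma antidiag_block_mxE (R : rcfType) p q (B : 'M[R]_(p, q)) (a b : 'I_(p + q)) :
  block_mx 0 B B^T 0 a b =
    if (a < p)%N && ~~ (b < p)%N then Bnat B a (b - p)
    else if ~~ (a < p)%N && (b < p)%N then Bnat B b (a - p) else 0.
Proof.
have BnatE (i : 'I_p) (j : 'I_q) : Bnat B i j = B i j by rewrite /Bnat !valK.
case: (split_ordP a) => i ->; case: (split_ordP b) => j ->;
  rewrite ?block_mxEul ?block_mxEur ?block_mxEdl ?block_mxEdr /= ?ltn_ord ?addKn;
  by rewrite ?(ltnNge (p + _)) ?leq_addr //= ?mxE ?BnatE.
Qed.

Definition fold_ord p q k m (r : 'I_(k * q + m * p)) : 'I_(p + q) :=
  Ordinal (@fold_index_lt p q k m r (ltn_ord r)).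

Lemma Fmat_mxsub (R : rcfType) n p q k (B : 'M[R]_(p, q)) : (0 < p)%N ->
  Fmat n k B
    = mxsub (@fold_ord p q k (n %/ k)) (@fold_ord p q k (n %/ k)) (block_mx 0 B B^T 0).
Proof.
move=> p0; apply/matrixP => r c; rewrite [LHS]mxE [RHS]mxE antidiag_block_mxE /=.
rewrite !fold_index_ltp // /Fentry /fold_index.
by case: (is_pblock p q k r); case: (is_pblock p q k c); rewrite //= addKn.
Qed.

Lemma card_fold_ord_fiber p q k m (a : 'I_(p + q)) : (0 < m)%N ->
  #|[pred r | @fold_ord p q k m r == a]| = if (a < p)%N then m else k.
Proof.
move=> m0; rewrite -(@sum_fold_index_eq p q k m a m0 (ltn_ord a)) big_mkord.
rewrite -sum1_card big_mkcond.
by apply: eq_bigr => r _; rewrite inE eq_sym.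
Qed.

Definition fold_mx (R : pzSemiRingType) p q k m : 'M[R]_(k * q + m * p, p + q) :=
  rowsub (@fold_ord p q k m) 1%:M.

Lemma fold_mx_gram (R : pzSemiRingType) p q k m : (0 < m)%N ->
  (fold_mx R p q k m)^T *m fold_mx R p q k m = block_mx m%:R%:M 0 0 k%:R%:M.
Proof.
move=> m0; rewrite tr_rowsub1_mulmx -!diag_const_mx -diag_mx_row; congr diag_mx.
apply/matrixP => i a; rewrite !mxE card_fold_ord_fiber //.
by case: splitP => j _; rewrite mxE.
Qed.

Lemma char_poly_Fpad (R : rcfType) n p q k (B : 'M[R]_(p, q)) :
  (0 < n)%N -> (0 < q)%N -> (q <= p)%N -> (k %| n)%N ->
  'X^(p + q) * char_poly (Fpad n k B)
    = 'X^(n * p + q) * char_poly (block_mx 0 B (n%:R *: B^T) 0).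
Proof.
move=> n0 q0 leqp kn; have p0 : (0 < p)%N := leq_trans q0 leqp.
have k0 : (0 < k)%N := dvdn_gt0 n0 kn.
have m0 : (0 < n %/ k)%N by rewrite divn_gt0 // dvdn_leq.
set D := fold_mx R p q k (n %/ k).
have Fpad_factor : Fpad n k B = col_mx D 0 *m (block_mx 0 B B^T 0 *m (col_mx D 0)^T).
  rewrite /Fpad Fmat_mxsub // mxsubE_mul -/D tr_col_mx mulmxA mul_col_mx mul_col_row.
  by rewrite !mul0mx trmx0 !mulmx0.
rewrite -(@Fpad_size n p q k n0 leqp kn) Fpad_factor char_poly_mulmxC.
rewrite -mulmxA tr_col_mx
 mul_row_col trmx0 mul0mx addr0 /D fold_mx_gram //; congr (_ * _).
rewrite mulmx_block !mulmx0 !mul0mx !addr0 !add0r !mul_mx_scalar.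
rewrite char_poly_antidiag_scale ?pnatr_eq0 -?lt0n // scalerA -natrM.
by rewrite mulnC divnK.
Qed.

Theorem theorem3p5 (R : rcfType) (n p q : nat) (B : 'M[R]_(p, q)) :
  (0 < n)%N -> (0 < q)%N -> (q <= p)%N ->
  forall k1 k2 : nat, (k1 %| n)%N -> (k2 %| n)%N ->
    cospectral (Fpad n k1 B) (Fpad n k2 B).
Proof.
move=> n0 q0 leqp k1 k2 k1n k2n; split; first by rewrite !Fpad_size.
move=> x; congr (mup x _); apply: (@mulfI _ 'X^(p + q)).
  by rewrite expf_neq0 // polyX_eq0.
by rewrite !char_poly_Fpad.
Qed.
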